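(* Let $p$ be a prime and let $Q\in\mathbb{Q}_p[X_1,\dots,X_n]$ be a nonsingular quadratic form which is anisotropic over $\mathbb{Q}_p$. Then the set $R(Q(\mathbb{Z}^n))$ is dense in $\mathbb{Q}_p$ if and only if $n\geq 3$.
   Context: A quadratic form $Q=\sum_{i,j}a_{ij}X_iX_j$ ($a_{ij}=a_{ji}$, not all zero) is nonsingular if $\det[a_{ij}]\neq 0$; it is anisotropic over $\mathbb{Q}_p$ if $Q(\mathbf{x})\neq 0$ for every nonzero $\mathbf{x}\in\mathbb{Q}_p^n$. For a subset $A$ of a field, $R(A)=\{a/b: a,b\in A,\ b\neq 0\}$. $Q(\mathbb{Z}^n)=\{Q(\mathbf{x}):\mathbf{x}\in\mathbb{Z}^n\}$. Density is with respect to the $p$-adic topology. *)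

(* Q_p is characterized axiomatically as the completion of Q
   w.r.t. the p-adic valuation (unique up to isometric isomorphism). *)
From HB Require Import structures.
From mathcomp Require Import all_boot all_order all_algebra.
Set Implicit Arguments. Unset Strict Implicit. Unset Printing Implicit Defensive.
Import Order.TTheory GRing.Theory Num.Theory.
Local Open Scope ring_scope.

Definition rat_pval (p : nat) (q : rat) : int :=
  (logn p `|numq q|%N)%:Z - (logn p `|denq q|%N)%:Z.

Definition vclose (K : fieldType) (v : K -> int) (m : int) (x y : K) : Prop :=
  x = y \/ m <= v (x - y).

(* A field K with a discrete valuation v (v 0 is irrelevant) that is
   a completion of Q for the p-adic valuation: this is Q_p up to
   isometric isomorphism. *)
Record padic_field (p : nat) (K : fieldType) := PadicField {
  pval : K -> int;
  pval_mul : forall x y : K, x != 0 -> y != 0 -> pval (x * y) = pval x + pval y;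
  pval_add : forall x y : K, x != 0 -> y != 0 -> x + y != 0 ->
               Num.min (pval x) (pval y) <= pval (x + y);
  pval_rat : forall q : rat, q != 0 ->
               ratr q != 0 :> K /\ pval (ratr q) = rat_pval p q;
  rat_dense : forall (x : K) (m : int), exists q : rat, vclose pval m x (ratr q);
  complete : forall s : nat -> K,
    (forall m : int, exists N, forall i j, (N <= i)%N -> (N <= j)%N ->
        vclose pval m (s i) (s j)) ->
    exists l : K, forall m : int, exists N, forall i, (N <= i)%N -> vclose pval m (s i) l
}.

Definition qform (K : fieldType) (n : nat) (A : 'M[K]_n) (x : 'I_n -> K) : K :=
  \sum_(i < n) \sum_(j < n) A i j * x i * x j.

Definition anisotropic (K : fieldType) (n : nat) (A : 'M[K]_n) : Prop :=
  forall x : 'I_n -> K, (exists i, x i != 0) -> qform A x != 0.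

Definition qvalues_Z (K : fieldType) (n : nat) (A : 'M[K]_n) : K -> Prop :=
  fun a => exists x : 'I_n -> int, a = qform A (fun i => (x i)%:~R).

Definition ratio_set (K : fieldType) (S : K -> Prop) : K -> Prop :=
  fun c => exists a b, S a /\ S b /\ b != 0 /\ c = a / b.

Definition pdense (p : nat) (K : fieldType) (V : padic_field p K) (S : K -> Prop) : Prop :=
  forall (y : K) (m : int), exists c, S c /\ vclose (pval V) m y c.

(* For n >= 3 we only use the first three coordinates.  Completing squares
   reduces to a diagonal anisotropic ternary form, and then every nonzero
   t in Q_p is a ratio of two of its values over Q_p: for odd p because a
   binary form with unit coefficients represents every unit (count squares
   mod p, then Hensel), for p = 2 by a finite search over the eight square
   classes.  Scaling the arguments by p^N makes them integral, and
   approximating them by integers approximates the ratio.  Conversely, a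
   ratio close enough to c0 is c0 times a square, so density fails as soon as
   some c0 is never a ratio of values over Q_p.  For n = 1 the ratios are
   squares and miss p; for n = 2 they are the values of the norm form
   X^2 + D Y^2 with -D not a square, which misses a whole square class. *)

From mathcomp Require Import all_boot all_order all_algebra.
From mathcomp Require Import zify ring.
Set Implicit Arguments. Unset Strict Implicit. Unset Printing Implicit Defensive.
Import Order.TTheory GRing.Theory Num.Theory.

Section SquaresModp.
Variables (p : nat) (hp : prime p) (p_odd : odd p).

Lemma sqr_mod_half (z : nat) : exists2 x, x <= p./2 & z ^ 2 = x ^ 2 %[mod p].
Proof.
set r := z %% p.
have zr : z ^ 2 = r ^ 2 %[mod p] by rewrite modnXm.
case: (leqP r p./2) => hr; first by exists r.
have [s ps] : exists s, p = s + r by exists (p - r); rewrite subnK // ltnW ?ltn_pmod ?prime_gt0.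
exists s; first lia.
have e : s ^ 2 + (2 * r) * p = p * p + r ^ 2 by rewrite ps; ring.
by rewrite zr -(modnMDl (2 * r) (s ^ 2)) addnC e modnMDl.
Qed.

Lemma sqr_mod_inj (c x y : nat) : ~~ (p %| c) ->
  x <= p./2 -> y <= p./2 -> c * x ^ 2 = c * y ^ 2 %[mod p] -> x = y.
Proof.
move=> hc.
wlog hyx : x y / y <= x.
  move=> H hx hy e; case: (leqP y x) => h; first exact: H.
  by apply/esym; apply: H => //; lia.
move=> hx hy /eqP; rewrite eqn_mod_dvd; last by rewrite leq_mul2l leq_exp2r // hyx orbT.
rewrite -mulnBr Gauss_dvdr; last by rewrite prime_coprime.
rewrite subn_sqr Euclid_dvdM // => /orP [] /dvdn_leq; lia.
Qed.

Lemma injective_images_meet (h n : nat) (f g : 'I_h -> 'I_n) :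
  injective f -> injective g -> n < h + h -> exists x y, f x = g y.
Proof.
move=> hf hg hn.
set A := [set f x | x : 'I_h]; set B := [set g x | x : 'I_h].
have cA : #|A| = h by rewrite card_imset // card_ord.
have cB : #|B| = h by rewrite card_imset // card_ord.
case: (set_0Vmem (A :&: B)) => [AB0|[z]].
  have := cardsU A B; rewrite AB0 cards0 subn0 cA cB => cAB.
  by have := max_card (A :|: B); rewrite cAB card_ord; lia.
by rewrite inE => /andP [/imsetP [x _ ->] /imsetP [y _ e]]; exists x, y.
Qed.

(* The sets {c1 x^2} and {w - c2 y^2}, x, y <= (p-1)/2, both have (p+1)/2
   elements modulo p, so they meet. *)
Lemma sum_two_squares_mod (c1 c2 w : nat) : ~~ (p %| c1) -> ~~ (p %| c2) ->
  exists x y : nat, c1 * x ^ 2 + c2 * y ^ 2 = w %[mod p].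
Proof.
move=> h1 h2.
have p_gt0 := prime_gt0 hp.
pose f (x : 'I_(p./2).+1) : 'I_p := Ordinal (ltn_pmod (c1 * x ^ 2) p_gt0).
pose g (x : 'I_(p./2).+1) : 'I_p :=
  Ordinal (ltn_pmod (w + (p - 1) * c2 * x ^ 2) p_gt0).
have hf : injective f.
  move=> x y /(congr1 val) /= e; apply: val_inj.
  by apply: (sqr_mod_inj h1) e; rewrite -ltnS ltn_ord.
have hc2 : ~~ (p %| (p - 1) * c2).
  rewrite Euclid_dvdM // negb_or h2 andbT.
  by apply/negP => /dvdn_leq; have := prime_gt1 hp; lia.
have hg : injective g.
  move=> x y /(congr1 val) /= /eqP; rewrite eqn_modDl => /eqP e; apply: val_inj.
  by apply: (sqr_mod_inj hc2) e; rewrite -ltnS ltn_ord.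
have [x [y /(congr1 val) /= e]] := injective_images_meet hf hg ltac:(lia).
exists x, y; rewrite -modnDml e modnDml -mulnA.
set k := c2 * _ ^ 2.
have -> : w + (p - 1) * k + k = k * p + w.
  by rewrite -addnA -mulSnr subn1 prednK // addnC mulnC.
by rewrite modnMDl.
Qed.

Lemma exists_nonsquare_mod :
  exists e, ~~ (p %| e) /\ forall z, e != z ^ 2 %[mod p].
Proof.
have p_gt0 := prime_gt0 hp.
pose f (x : 'I_(p./2).+1) : 'I_p := Ordinal (ltn_pmod (x ^ 2) p_gt0).
set A := [set f x | x : 'I_(p./2).+1].
have cA : #|A| <= p./2.+1 by rewrite (leq_trans (leq_imset_card _ _)) // card_ord.
have [e eA] : exists e : 'I_p, e \notin A.
  apply/existsP; rewrite -negb_forall; apply/negP => /forallP allA.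
  have : #|'I_p| <= #|A| by apply/subset_leq_card/subsetP => y _; apply: allA.
  have p_gt2 : 2 < p by case: (p) (prime_gt1 hp) p_odd => [|[|[|q]]].
  by rewrite card_ord; lia.
have nsq z : z ^ 2 %% p != e.
  apply: contraNneq eA => ez; have [x hx zx] := sqr_mod_half z.
  by apply/imsetP; exists (Ordinal (hx : x < p./2.+1)) => //; apply: val_inj; rewrite /= -ez zx.
exists e; split => [|z]; last by rewrite (modn_small (ltn_ord e)) eq_sym.
apply: contraNN (nsq 0); rewrite /dvdn (modn_small (ltn_ord e)) => /eqP e0.
by rewrite e0 mod0n.
Qed.

End SquaresModp.

Definition odd_part (n : nat) : nat := n %/ 2 ^ logn 2 n.

Lemma odd_partE (n : nat) : 0 < n -> odd (odd_part n) /\ n = odd_part n * 2 ^ logn 2 n.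
Proof.
move=> n_gt0; have [m odd_m en] := pfactor_coprime (isT : prime 2) n_gt0.
have -> : odd_part n = m by rewrite /odd_part {1}en mulnK ?expn_gt0.
by rewrite -coprime2n.
Qed.

(* Over Q_2 every nonzero number is r * s^2 with r in [sqclass2], and by
   Hensel a unit is a square iff it is 1 mod 8.  So [sq_ratio2 a b neg]
   certifies that (-1)^neg a / b is a nonzero square, and the tables below
   are finite searches for witnesses in a small box. *)
Definition sqclass2 : seq nat := [:: 1; 3; 5; 7; 2; 6; 10; 14].

Definition sq_ratio2 (a b : nat) (neg : bool) : bool :=
  [&& odd (odd_part a), odd (odd_part b), ~~ odd (logn 2 a + logn 2 b) &
    (if neg then odd_part a + odd_part b else odd_part a + 7 * odd_part b) %% 8 == 0].

Lemma sq_ratio2_pos (a b : nat) (neg : bool) : sq_ratio2 a b neg -> 0 < a /\ 0 < b.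
Proof. by case: a => [|a]; case: b => [|b] //; rewrite /sq_ratio2 /odd_part ?andbF. Qed.

Definition box3 : seq (nat * nat * nat) :=
  [seq (xy, z) | xy <- [seq (x, y) | x <- iota 0 4, y <- iota 0 4], z <- iota 0 4].

Definition denom_box : seq (nat * nat * nat) := [:: (1, 0, 0); (0, 1, 0); (0, 0, 1); (1, 1, 1)].

Definition diagq_nat (r1 r2 r3 : nat) (x : nat * nat * nat) : nat :=
  r1 * x.1.1 ^ 2 + r2 * x.1.2 ^ 2 + r3 * x.2 ^ 2.

Definition isotropic_witness (r1 r2 r3 : nat) : bool :=
  has (fun x => sq_ratio2 (r1 * x.1.1 ^ 2 + r2 * x.1.2 ^ 2) (r3 * x.2 ^ 2) true) box3.

Definition ratio_witness (r1 r2 r3 c : nat) : bool :=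
  has (fun y => has (fun x =>
    sq_ratio2 (diagq_nat r1 r2 r3 x) (c * diagq_nat r1 r2 r3 y) false) box3) denom_box.

Definition diag_table : bool :=
  all (fun r1 => all (fun r2 => all (fun r3 =>
    isotropic_witness r1 r2 r3 || all (ratio_witness r1 r2 r3) sqclass2)
  sqclass2) sqclass2) sqclass2.

Lemma diag_tableT : diag_table.
Proof. by vm_compute. Qed.

(* For [d] in [sqclass2] with -d not a square (d <> 7), the class
   [binary_nonrep2 d] is not represented by x^2 + d y^2; modulo 32 it suffices
   to look at primitive (x, y) and at the scalings by 4^j, j < 4. *)
Definition binary_nonrep2 (d : nat) : nat :=
  if d \in [:: 1; 5; 6; 14] then 3 else if d == 3 then 2 else 5.

Definition binary_table (d c : nat) : bool :=
  all (fun x => all (fun y => (odd x || odd y) ==>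
    all (fun j => (x ^ 2 + d * y ^ 2) %% 32 != (c * 4 ^ j) %% 32) (iota 0 4))
  (iota 0 32)) (iota 0 32).

Lemma binary_tableT : all (fun d => (d != 7) ==> binary_table d (binary_nonrep2 d)) sqclass2.
Proof. by vm_compute. Qed.

Lemma sum_sqr_mod32 (x y r : nat) :
  ((x %% 32) ^ 2 + r * (y %% 32) ^ 2) %% 32 = (x ^ 2 + r * y ^ 2) %% 32.
Proof. by rewrite -modnDm -[in RHS]modnDm -modnMmr -[in RHS]modnMmr !modnXm. Qed.

Lemma pow4_mod32 (c j : nat) : (c * 2 ^ (j + j)) %% 32 = (c * 4 ^ (minn j 3)) %% 32.
Proof.
have -> : 2 ^ (j + j) = 4 ^ j by rewrite addnn -mul2n expnM.
case: (leqP j 3) => // hj; rewrite -(subnK (ltnW hj)) expnD.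
have -> : c * (4 ^ (j - 3) * 4 ^ 3) = c * 4 ^ (j - 3) * 2 * 32 by rewrite -!mulnA.
have -> : c * 4 ^ 3 = c * 2 * 32 by rewrite -!mulnA.
by rewrite !modnMl.
Qed.

Lemma binary_nonrep2_mod32 (d x y j : nat) : d \in sqclass2 -> d != 7 -> odd x || odd y ->
  x ^ 2 + d * y ^ 2 != binary_nonrep2 d * 2 ^ (j + j) %[mod 32].
Proof.
move=> hd hd7 xy; move/allP: binary_tableT => /(_ d hd) /implyP /(_ hd7) /allP.
move=> /(_ (x %% 32)); rewrite mem_iota ltn_pmod // => /(_ isT) /allP.
move=> /(_ (y %% 32)); rewrite mem_iota ltn_pmod // => /(_ isT) /implyP.
rewrite !odd_mod // => /(_ xy) /allP /(_ (minn j 3)); rewrite mem_iota.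
by rewrite sum_sqr_mod32 pow4_mod32; apply; apply: leq_ltn_trans (geq_minr _ _) _.
Qed.

Local Open Scope ring_scope.

Section PadicField.
Variables (p : nat) (hp : prime p) (K : fieldType) (V : padic_field p K).
Local Notation v := (pval V).

(* x lies in p^m Z_p; x = 0 is a separate case because v 0 is unspecified. *)
Definition vge (m : int) (x : K) : Prop := x = 0 \/ m <= v x.

Lemma pval1 : v 1 = 0.
Proof.
have h : v (1 * 1) = v 1 + v 1 by apply: pval_mul; apply: oner_neq0.
by rewrite mulr1 in h; lia.
Qed.

Lemma pvalM x y : x != 0 -> y != 0 -> v (x * y) = v x + v y.
Proof. exact: pval_mul. Qed.

Lemma pvalN x : v (- x) = v x.
Proof.
have N1_neq0 : (-1 : K) != 0 by rewrite oppr_eq0 oner_neq0.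
have vN1 : v (-1) = 0 by have := pvalM N1_neq0 N1_neq0; rewrite mulrNN mulr1 pval1; lia.
have [->|x_neq0] := eqVneq x 0; first by rewrite oppr0.
by rewrite -mulN1r pvalM // vN1 add0r.
Qed.

Lemma pvalV x : x != 0 -> v x^-1 = - v x.
Proof.
by move=> x_neq0; have := pvalM x_neq0 (invr_neq0 x_neq0); rewrite mulfV // pval1; lia.
Qed.

Lemma pvalX x n : x != 0 -> v (x ^+ n) = v x *+ n.
Proof.
move=> x_neq0; elim: n => [|n IHn]; first by rewrite expr0 pval1.
by rewrite exprS pvalM ?expf_neq0 // IHn mulrS.
Qed.

Lemma pval_sqr x : x != 0 -> v (x ^+ 2) = 2 * v x.
Proof. by move=> x_neq0; rewrite pvalX //; lia. Qed.

Lemma pval_int (z : int) : z != 0 -> (z%:~R : K) != 0 /\ v z%:~R = (logn p `|z|)%:Z.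
Proof.
move=> z_neq0; have [] := pval_rat V (_ : z%:Q != 0); first by rewrite intr_eq0.
rewrite ratr_int => zK_neq0 ->; split => //.
by rewrite /rat_pval numq_int denq_int /= logn1; lia.
Qed.

Lemma intr_neq0 (z : int) : z != 0 -> (z%:~R : K) != 0.
Proof. by case/pval_int. Qed.

Lemma natr_neq0 (n : nat) : (n != 0)%N -> (n%:R : K) != 0.
Proof. by move=> n_neq0; rewrite pmulrn intr_neq0 //; lia. Qed.

Lemma pval_nat (n : nat) : (0 < n)%N -> v n%:R = logn p n.
Proof. by move=> n_gt0; rewrite pmulrn; case: (@pval_int n) => //; lia. Qed.

Lemma p_neq0 : (p%:R : K) != 0.
Proof. by rewrite natr_neq0 // -lt0n prime_gt0. Qed.

Lemma pval_p : v p%:R = 1.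
Proof. by rewrite pval_nat ?prime_gt0 // logn_prime // eqxx. Qed.

Lemma pval_2 : v 2 = (p == 2)%N.
Proof. by rewrite pval_nat // logn_prime //; case: eqP. Qed.

Lemma pval2_ge0 : 0 <= v 2.
Proof. by rewrite pval_2. Qed.

Lemma vge_pval m x : vge m x -> x != 0 -> m <= v x.
Proof. by case=> [->|//]; rewrite eqxx. Qed.

Lemma vge_self x : vge (v x) x.
Proof. by right. Qed.

Lemma vge_le m m' x : m' <= m -> vge m x -> vge m' x.
Proof. by move=> le_m [->|hm]; [left|right; lia]. Qed.

Lemma vgeD m x y : vge m x -> vge m y -> vge m (x + y).
Proof.
have [->|x_neq0] := eqVneq x 0; first by rewrite add0r.
have [->|y_neq0] := eqVneq y 0; first by rewrite addr0.
move=> /vge_pval /(_ x_neq0) hx /vge_pval /(_ y_neq0) hy.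
have [|xy_neq0] := eqVneq (x + y) 0; first by left.
by right; have := pval_add V x_neq0 y_neq0 xy_neq0; lia.
Qed.

Lemma vgeN m x : vge m x -> vge m (- x).
Proof. by case=> [->|hx]; [left; rewrite oppr0|right; rewrite pvalN]. Qed.

Lemma vgeB m x y : vge m x -> vge m y -> vge m (x - y).
Proof. by move=> hx /vgeN; apply: vgeD. Qed.

Lemma vgeM m k x y : vge m x -> vge k y -> vge (m + k) (x * y).
Proof.
have [->|x_neq0] := eqVneq x 0; first by rewrite mul0r; left.
have [->|y_neq0] := eqVneq y 0; first by rewrite mulr0; left.
move=> /vge_pval /(_ x_neq0) hx /vge_pval /(_ y_neq0) hy.
by right; rewrite pvalM //; lia.
Qed.

Lemma vgeMr m x y : vge m x -> vge (m + v y) (x * y).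
Proof. by move=> hx; apply: vgeM hx (vge_self y). Qed.

Lemma vge_eq0 x : (forall m, vge m x) -> x = 0.
Proof.
move=> hx; apply/eqP/negP => /negP x_neq0.
by have := vge_pval (hx (v x + 1)) x_neq0; lia.
Qed.

Lemma pvalDl x y : x != 0 -> vge (v x + 1) y -> v (x + y) = v x.
Proof.
move=> x_neq0 hy; have [->|y_neq0] := eqVneq y 0; first by rewrite addr0.
have lt_xy := vge_pval hy y_neq0.
have xy_neq0 : x + y != 0.
  apply/eqP => /(canRL (addKr x)); rewrite addr0 => ey.
  by move: lt_xy; rewrite ey pvalN; lia.
have ny_neq0 : - y != 0 by rewrite oppr_eq0.
have h1 := pval_add V x_neq0 y_neq0 xy_neq0.
have h2 := pval_add V xy_neq0 ny_neq0; rewrite addrK pvalN in h2.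
move: h1 (h2 x_neq0) lt_xy; set a := v x; set b := v y; set c := v (x + y); lia.
Qed.

Lemma vcloseE m x y : vclose v m x y <-> vge m (x - y).
Proof.
rewrite /vclose /vge; split => -[h|h]; [left; rewrite h subrr|right|left|right] => //.
by apply/eqP; rewrite -subr_eq0 h.
Qed.

Lemma vge_int0 (z : int) : vge 0 z%:~R.
Proof.
by rewrite /vge; have [->|/pval_int [_ ->]] := eqVneq z 0; [left; rewrite mulr0z|right].
Qed.

Lemma vge_nat0 (n : nat) : vge 0 n%:R.
Proof. by rewrite pmulrn; apply: vge_int0. Qed.

Lemma vge_nat (k n : nat) : (p ^ k %| n)%N -> vge k n%:R.
Proof.
case: (posnP n) => [->|n_gt0]; first by left.
by rewrite pfactor_dvdn // => hk; right; rewrite pval_nat.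
Qed.

Lemma nat_vge (k n : nat) : vge k n%:R -> (p ^ k %| n)%N.
Proof.
case: (posnP n) => [->|n_gt0]; first by rewrite dvdn0.
case=> [/eqP|]; first by rewrite (negbTE (natr_neq0 _)) //; lia.
by rewrite pval_nat // pfactor_dvdn //; lia.
Qed.

Lemma vge_modn (a b k : nat) : a = b %[mod p ^ k] <-> vge k (a%:R - b%:R).
Proof.
wlog le_ba : a b / (b <= a)%N.
  move=> H; case: (leqP b a) => [/H //|/ltnW le_ab]; rewrite -opprB.
  split=> [e|/vgeN]; first by apply/vgeN/(H _ _ le_ab).
  by rewrite opprK => /(H _ _ le_ab).
rewrite -natrB //; split=> [/eqP|/nat_vge]; last by move=> ?; apply/eqP; rewrite eqn_mod_dvd.
by rewrite eqn_mod_dvd // => /vge_nat.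
Qed.

Lemma coprime_denq (q : rat) : vge 0 (ratr q) -> coprime p `|denq q|.
Proof.
have [->|q_neq0] := eqVneq q 0; first by rewrite coprimen1.
have [qK_neq0 vq] := pval_rat V q_neq0.
move=> /vge_pval /(_ qK_neq0); rewrite vq /rat_pval => v_ge0.
rewrite prime_coprime //; apply/negP => p_den.
have num_gt0 : (0 < `|numq q|)%N by rewrite absz_gt0 numq_eq0.
have p_num : (p %| `|numq q|)%N.
  rewrite -[p]expn1 pfactor_dvdn //.
  have : (0 < logn p `|denq q|)%N by rewrite -pfactor_dvdn ?expn1 ?absz_gt0 ?denq_neq0.
  lia.
have := coprime_num_den q; rewrite /coprime => /eqP g1.
have : (p %| gcdn `|numq q| `|denq q|)%N by rewrite dvdn_gcd p_num p_den.
by rewrite g1 dvdn1 => /eqP p1; have := prime_gt1 hp; rewrite p1.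
Qed.

(* Bezout: if u d + w p^M = 1 then n/d = u n + (n w / d) p^M. *)
Lemma ratr_int_approx (q : rat) (M : nat) : vge 0 (ratr q) ->
  exists z : int, vge M (ratr q - z%:~R).
Proof.
move=> vq; set a := numq q; set b := denq q.
have b_neq0 : (b%:~R : K) != 0 by apply: intr_neq0; apply: denq_neq0.
have vb : v b%:~R = 0.
  by have [_ ->] := pval_int (denq_neq0 q); rewrite logn_coprime ?coprime_denq.
have cop : coprimez b (p%:Z ^+ M).
  by apply: coprimezXr; rewrite coprimezE /= coprime_sym coprime_denq.
have [[u w] /= uw] := coprimezP _ _ cop.
have uwK : (u%:~R * b%:~R + w%:~R * p%:R ^+ M : K) = 1.
  by have := congr1 (fun z : int => z%:~R : K) uw; rewrite /= rmorphD !rmorphM /= rmorphXn.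
exists (u * a).
have -> : ratr q - (u * a)%:~R = (a * w)%:~R * p%:R ^+ M * (b%:~R : K)^-1.
  rewrite /ratr -/a -/b !rmorphM /=.
  have wpM : (w%:~R * p%:R ^+ M : K) = 1 - u%:~R * b%:~R.
    by apply/eqP; rewrite eq_sym subr_eq addrC uwK.
  transitivity (a%:~R * (w%:~R * p%:R ^+ M) / b%:~R : K); last by ring.
  by rewrite wpM; field.
have vpM : vge M (p%:R ^+ M : K) by right; rewrite pvalX ?p_neq0 // pval_p; lia.
have := vgeMr (b%:~R : K)^-1 (vgeM (vge_int0 (a * w)) vpM).
by rewrite pvalV // vb add0r addr0.
Qed.

Lemma nat_approx (x : K) (M : nat) : vge 0 x -> exists n : nat, vge M (x - n%:R).
Proof.
move=> vx; have [q /vcloseE xq] := rat_dense V x M.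
have vq : vge 0 (ratr q).
  by rewrite -[ratr q](subKr x); apply: vgeB vx _; apply: vge_le xq; lia.
have [z qz] := ratr_int_approx M vq.
set d : int := (p ^ M)%N.
have pM_gt0 : (0 < p ^ M)%N by rewrite expn_gt0 prime_gt0.
have d_neq0 : d != 0 by rewrite /d; lia.
exists `|(z %% d)%Z|%N.
have -> : x - `|(z %% d)%Z|%N%:R = (x - ratr q) + (ratr q - z%:~R) + (z %/ d)%Z%:~R * p%:R ^+ M.
  have zK : (z%:~R : K) = (z %/ d)%Z%:~R * p%:R ^+ M + (z %% d)%Z%:~R.
    by rewrite {1}(divz_eq z d) intrD intrM /d -pmulrn natrX.
  rewrite pmulrn gez0_abs ?modz_ge0 //.
  by rewrite -[(z %% d)%Z%:~R](addKr ((z %/ d)%Z%:~R * p%:R ^+ M)) -zK; ring.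
apply: vgeD; first exact: vgeD.
have := vgeM (vge_int0 (z %/ d)%Z) (_ : vge M (p%:R ^+ M : K)); rewrite add0r; apply.
by right; rewrite pvalX ?p_neq0 // pval_p; lia.
Qed.

Lemma unit_not_vge1 (u : K) : v u = 0 -> u != 0 -> ~ vge 1 u.
Proof. by move=> vu u_neq0 /vge_pval /(_ u_neq0); lia. Qed.

Lemma unit_approx (u : K) (M : nat) : v u = 0 -> u != 0 -> (0 < M)%N ->
  exists n : nat, ~~ (p %| n)%N /\ vge M (u - n%:R).
Proof.
move=> vu u_neq0 M_gt0; have vu0 : vge 0 u by right; rewrite vu.
have [n un] := nat_approx M vu0.
exists n; split => //; apply/negP => p_n.
apply: (unit_not_vge1 vu u_neq0); rewrite -(subrK n%:R u).
by apply: vgeD; [apply: vge_le un; lia | apply: vge_nat; rewrite expn1].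
Qed.

Definition ppow (k : int) : K := p%:R ^ k.

Lemma ppow_neq0 k : ppow k != 0.
Proof. exact/expfz_neq0/p_neq0. Qed.

Lemma ppowD a b : ppow (a + b) = ppow a * ppow b.
Proof. exact/expfzDr/p_neq0. Qed.

Lemma ppow_nat (n : nat) : ppow n = p%:R ^+ n.
Proof. by rewrite /ppow -exprnP. Qed.

Lemma ppowDN k : ppow k * ppow (- k) = 1.
Proof. by rewrite -ppowD subrr (ppow_nat 0). Qed.

Lemma ppow_even q : ppow (q + q) = ppow q ^+ 2.
Proof. by rewrite ppowD expr2. Qed.

Lemma ppow_odd q : ppow (q + q + 1) = ppow q ^+ 2 * p%:R.
Proof. by rewrite ppowD ppow_even (ppow_nat 1) expr1. Qed.

Lemma pval_ppow k : v (ppow k) = k.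
Proof.
case: k => n; first by rewrite ppow_nat pvalX ?p_neq0 // pval_p; lia.
rewrite /ppow NegzE -exprnN pvalV ?expf_neq0 ?p_neq0 // pvalX ?p_neq0 // pval_p; lia.
Qed.

Lemma pval_decomp (x : K) : x != 0 -> exists u, [/\ v u = 0, u != 0 & x = ppow (v x) * u].
Proof.
move=> x_neq0; have p_neq0 := ppow_neq0 (v x).
exists (x / ppow (v x)); split; last by field.
  by rewrite pvalM ?invr_eq0 // pvalV // pval_ppow; lia.
by rewrite mulf_neq0 ?invr_eq0.
Qed.

Lemma int_even_odd (k : int) : exists q, k = q + q \/ k = q + q + 1.
Proof.
case: (boolP (odd `|k|%N)) => ho; last by exists (k %/ 2)%Z; left; lia.
by exists ((k - 1) %/ 2)%Z; right; lia.
Qed.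

Lemma pval_near1 k s : 1 <= k -> vge k (s - 1) -> s != 0 /\ v s = 0.
Proof.
move=> k_ge1 hs.
have hs1 : vge (v 1 + 1) (s - 1) by rewrite pval1; apply: vge_le hs.
have vs : v s = 0 by rewrite -(subrK 1 s) addrC pvalDl ?oner_neq0 // pval1.
split=> //; apply: contra_eqN vs => /eqP s0.
by move: hs; rewrite s0 sub0r => /vgeN; rewrite opprK => /vge_pval; rewrite oner_neq0 pval1; lia.
Qed.

Lemma vge_limit (s : nat -> K) (f : nat -> int) :
  {homo f : m n / (m <= n)%N >-> m <= n} -> (forall m, exists n, m <= f n) ->
  (forall n, vge (f n) (s n.+1 - s n)) -> exists l, forall n, vge (f n) (s n - l).
Proof.
move=> f_mono f_unbdd ds.
have tele N i : (N <= i)%N -> vge (f N) (s i - s N).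
  elim: i => [|i IHi]; first by rewrite leqn0 => /eqP ->; rewrite subrr; left.
  rewrite leq_eqVlt ltnS => /orP [/eqP ->|le_Ni]; first by rewrite subrr; left.
  rewrite -(subrK (s i) (s i.+1)) -addrA.
  by apply: vgeD (IHi le_Ni); apply: vge_le (f_mono _ _ le_Ni) (ds i).
have [l hl] : exists l, forall m, exists N, forall i, (N <= i)%N -> vclose v m (s i) l.
  apply: complete => m; have [N hN] := f_unbdd m; exists N => i j hi hj.
  apply/vcloseE; have -> : s i - s j = (s i - s N) - (s j - s N) by ring.
  by apply: vge_le hN _; apply: vgeB; apply: tele.
exists l => n; have [N hN] := hl (f n).
have -> : s n - l = (s (maxn N n) - l) - (s (maxn N n) - s n) by ring.
by apply: vgeB; [apply/vcloseE/hN/leq_maxl | apply/tele/leq_maxr].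
Qed.

Definition newton_sqrt (t : K) (n : nat) : K := iter n (fun s => (s + t / s) / 2) 1.

(* The Newton step s |-> (s + t/s)/2 changes s by -(s^2 - t)/2s and replaces
   s^2 - t by ((s^2 - t)/2s)^2. *)
Lemma newton_step (t s : K) (k : int) : 0 < k ->
  vge (v 2 + 1) (s - 1) -> vge (2 * v 2 + k) (s ^+ 2 - t) ->
  vge (v 2 + k) ((s + t / s) / 2 - s) /\ vge (2 * v 2 + 2 * k) (((s + t / s) / 2) ^+ 2 - t).
Proof.
move=> k_gt0 hs1 hst.
have v2_ge1 : 1 <= v 2 + 1 by have := pval2_ge0; lia.
have [s_neq0 vs] := pval_near1 v2_ge1 hs1.
have two_neq0 : (2 : K) != 0 by apply: natr_neq0.
have v2s : v (2 * s) = v 2 by rewrite pvalM // vs addr0.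
have two_s_neq0 : 2 * s != 0 by rewrite mulf_neq0.
have -> : (s + t / s) / 2 - s = - (s ^+ 2 - t) * (2 * s)^-1 by field; rewrite two_neq0 s_neq0.
have -> : ((s + t / s) / 2) ^+ 2 - t = (s ^+ 2 - t) ^+ 2 * ((2 * s) ^+ 2)^-1.
  by field; rewrite two_neq0 s_neq0.
split; first by have := vgeMr (2 * s)^-1 (vgeN hst); rewrite pvalV // v2s; apply: vge_le; lia.
have := vgeMr ((2 * s) ^+ 2)^-1 (vgeM hst hst).
by rewrite -expr2 pvalV ?expf_neq0 // pval_sqr // v2s; apply: vge_le; lia.
Qed.

(* Newton's iteration from 1 converges quadratically; its limit is a root. *)
Lemma sqr_near1 (t : K) : vge (2 * v 2 + 1) (t - 1) -> exists2 s, s != 0 & t = s ^+ 2.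
Proof.
move=> ht; have v2_ge0 := pval2_ge0; set s := newton_sqrt t.
have v2_ge1 : 1 <= v 2 + 1 by lia.
have pow2_gt0 n : 0 < (2 ^ n)%N :> int by rewrite ltz_nat expn_gt0.
have inv n : vge (v 2 + 1) (s n - 1) /\ vge (2 * v 2 + (2 ^ n)%N) (s n ^+ 2 - t).
  elim: n => [|n [IH1 IH2]].
    rewrite /s /= subrr expr1n -opprB; split; first by left.
    by apply/vgeN/(vge_le _ ht); rewrite expn0.
  have [d1 d2] := newton_step (pow2_gt0 n) IH1 IH2.
  rewrite /s /= -/(s n); split; last by apply: vge_le d2; rewrite expnS; lia.
  rewrite -(subrK (s n) (_ / 2)) -addrA; apply: vgeD IH1.
  by apply: vge_le d1; have := expn_gt0 2 n; lia.
have [l hl] : exists l, forall n, vge (v 2 + (2 ^ n)%N) (s n - l).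
  apply: vge_limit => [m n le_mn | m | n].
  - by have := leq_pexp2l (isT : (0 < 2)%N) le_mn; lia.
  - by exists `|m|%N; have := ltn_expl `|m| (isT : (1 < 2)%N); lia.
  - by have [IH1 IH2] := inv n; have [] := newton_step (pow2_gt0 n) IH1 IH2.
have l2t : l ^+ 2 = t.
  apply/eqP; rewrite -subr_eq0; apply/eqP/vge_eq0 => m.
  set n := `|m|%N; have [IH1 IH2] := inv n.
  have [sn_neq0 vsn] := pval_near1 v2_ge1 IH1.
  have -> : l ^+ 2 - t = (s n ^+ 2 - t) - (s n - l) * (2 * s n - (s n - l)) by ring.
  have h2s : vge 0 (2 * s n - (s n - l)).
    apply: vgeB; first by right; rewrite pvalM ?natr_neq0 // vsn; lia.
    by apply: vge_le (hl n); lia.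
  have n_big : m <= (2 ^ n)%N by have := ltn_expl n (isT : (1 < 2)%N); lia.
  apply: vgeB; first by apply: vge_le IH2; lia.
  by have := vgeM (hl n) h2s; apply: vge_le; lia.
have t_neq0 : t != 0 by case: (pval_near1 (_ : 1 <= 2 * v 2 + 1) ht) => //; lia.
by exists l; [apply: contra_neq t_neq0 => l0; rewrite -l2t l0 expr0n | rewrite l2t].
Qed.

Definition diagq (a b c x y z : K) : K := a * x ^+ 2 + b * y ^+ 2 + c * z ^+ 2.

Definition diagq_ratio (a b c t : K) : Prop := exists x y z x' y' z',
  diagq a b c x' y' z' != 0 /\ t = diagq a b c x y z / diagq a b c x' y' z'.

Definition diagq_aniso (a b c : K) : Prop :=
  forall x y z, (x != 0) || (y != 0) || (z != 0) -> diagq a b c x y z != 0.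

Lemma diagq_scale a b c l s1 s2 s3 x y z :
  diagq (l * a * s1 ^+ 2) (l * b * s2 ^+ 2) (l * c * s3 ^+ 2) x y z =
  l * diagq a b c (s1 * x) (s2 * y) (s3 * z).
Proof. by rewrite /diagq; ring. Qed.

Lemma diagq_ratio_scale a b c l s1 s2 s3 t : l != 0 ->
  diagq_ratio (l * a * s1 ^+ 2) (l * b * s2 ^+ 2) (l * c * s3 ^+ 2) t -> diagq_ratio a b c t.
Proof.
move=> l_neq0 [x [y [z [x' [y' [z' []]]]]]]; rewrite !diagq_scale => den_neq0 ->.
exists (s1 * x), (s2 * y), (s3 * z), (s1 * x'), (s2 * y'), (s3 * z').
have den'_neq0 : diagq a b c (s1 * x') (s2 * y') (s3 * z') != 0.
  by apply: contraNneq den_neq0 => ->; rewrite mulr0.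
by split=> //; field; rewrite l_neq0 den'_neq0.
Qed.

Lemma diagq_aniso_scale a b c l s1 s2 s3 : l != 0 -> s1 != 0 -> s2 != 0 -> s3 != 0 ->
  diagq_aniso a b c -> diagq_aniso (l * a * s1 ^+ 2) (l * b * s2 ^+ 2) (l * c * s3 ^+ 2).
Proof.
move=> l_neq0 s1_neq0 s2_neq0 s3_neq0 an x y z xyz; rewrite diagq_scale mulf_neq0 // an //.
by rewrite !mulf_eq0 (negbTE s1_neq0) (negbTE s2_neq0) (negbTE s3_neq0).
Qed.

Lemma diagq_ratio_swap a b c t : diagq_ratio a c b t -> diagq_ratio a b c t.
Proof.
have e x y z : diagq a c b x y z = diagq a b c x z y by rewrite /diagq; ring.
by case=> [x [y [z [x' [y' [z']]]]]]; rewrite !e => ?; exists x, z, y, x', z', y'.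
Qed.

Lemma diagq_aniso_swap a b c : diagq_aniso a b c -> diagq_aniso a c b.
Proof.
move=> an x y z xyz; have -> : diagq a c b x y z = diagq a b c x z y by rewrite /diagq; ring.
by apply: an; move: xyz; case: (x != 0); case: (y != 0); case: (z != 0).
Qed.

Lemma diagq_ratio_cycle a b c t : diagq_ratio b c a t -> diagq_ratio a b c t.
Proof.
have e x y z : diagq b c a x y z = diagq a b c z x y by rewrite /diagq; ring.
by case=> [x [y [z [x' [y' [z']]]]]]; rewrite !e => ?; exists z, x, y, z', x', y'.
Qed.

Lemma diagq_aniso_cycle a b c : diagq_aniso a b c -> diagq_aniso b c a.
Proof.
move=> an x y z xyz; have -> : diagq b c a x y z = diagq a b c z x y by rewrite /diagq; ring.
by apply: an; move: xyz; case: (x != 0); case: (y != 0); case: (z != 0).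
Qed.

Lemma diagq_ratioMsqr a b c t s : s != 0 -> diagq_ratio a b c t -> diagq_ratio a b c (t * s ^+ 2).
Proof.
move=> s_neq0 [x [y [z [x' [y' [z' [den_neq0 ->]]]]]]].
exists (s * x), (s * y), (s * z), x', y', z'; split => //.
by move: den_neq0; rewrite /diagq => ?; field.
Qed.

Lemma diagq_aniso_neq0 a b c : diagq_aniso a b c -> [/\ a != 0, b != 0 & c != 0].
Proof.
move=> an; have e1 := oner_neq0 K; split.
- by have := an 1 0 0; rewrite /diagq expr1n expr0n /= !mulr0 !addr0 mulr1 e1; apply.
- by have := an 0 1 0; rewrite /diagq expr1n expr0n /= !mulr0 add0r addr0 mulr1 e1 orbT; apply.
- by have := an 0 0 1; rewrite /diagq expr1n expr0n /= !mulr0 !add0r mulr1 e1 !orbT; apply.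
Qed.

Lemma diagq_z0 a b c x y : diagq a b c x y 0 = a * x ^+ 2 + b * y ^+ 2.
Proof. by rewrite /diagq expr0n /= mulr0 addr0. Qed.

Section OddPrime.
Hypothesis p_neq2 : p != 2%N.

Lemma odd_prime_p : odd p.
Proof. by case: (even_prime hp) p_neq2 => ->. Qed.

(* Solve modulo p by counting, then lift the solution by Hensel. *)
Lemma unit_binary_onto u1 u2 w : v u1 = 0 -> v u2 = 0 -> v w = 0 ->
  u1 != 0 -> u2 != 0 -> w != 0 -> exists X Y, u1 * X ^+ 2 + u2 * Y ^+ 2 = w.
Proof.
move=> vu1 vu2 vw u1_neq0 u2_neq0 w_neq0.
have [U1 [pU1 sU1]] := unit_approx (M := 1) vu1 u1_neq0 isT.
have [U2 [pU2 sU2]] := unit_approx (M := 1) vu2 u2_neq0 isT.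
have vw0 : vge 0 w by right; rewrite vw.
have [W sW] := nat_approx 1 vw0.
have [x [y /(vge_modn _ _ 1)]] := sum_two_squares_mod hp odd_prime_p W pU1 pU2.
rewrite natrD (natrM _ U1) (natrM _ U2) !natrX => sxy.
set E := u1 * x%:R ^+ 2 + u2 * y%:R ^+ 2 - w.
have sE : vge 1 E.
  have -> : E = (u1 - U1%:R) * x%:R ^+ 2 + (u2 - U2%:R) * y%:R ^+ 2 - (w - W%:R)
      + (U1%:R * x%:R ^+ 2 + U2%:R * y%:R ^+ 2 - W%:R) by rewrite /E; ring.
  apply: vgeD sxy; apply: vgeB sW; apply: vgeD.
    by have := vgeM sU1 (vge_nat0 (x ^ 2)); rewrite addr0 natrX.
  by have := vgeM sU2 (vge_nat0 (y ^ 2)); rewrite addr0 natrX.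
have [s s_neq0 st] : exists2 s, s != 0 & (u1 * x%:R ^+ 2 + u2 * y%:R ^+ 2) / w = s ^+ 2.
  apply: sqr_near1; rewrite pval_2 (negbTE p_neq2) mulr0 add0r.
  have -> : (u1 * x%:R ^+ 2 + u2 * y%:R ^+ 2) / w - 1 = E * w^-1 by rewrite /E; field.
  by have := vgeMr w^-1 sE; rewrite pvalV // vw oppr0 addr0.
exists (x%:R / s), (y%:R / s).
have -> : u1 * (x%:R / s) ^+ 2 + u2 * (y%:R / s) ^+ 2 =
    (u1 * x%:R ^+ 2 + u2 * y%:R ^+ 2) / w * w / s ^+ 2 by field; rewrite w_neq0 s_neq0.
by rewrite st; field.
Qed.

(* If v b = 2h, the unit binary part represents -b / p^2h: an isotropic vector. *)
Lemma diagq_aniso_pval_odd u1 u2 b : v u1 = 0 -> v u2 = 0 -> u1 != 0 -> u2 != 0 ->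
  diagq_aniso u1 u2 b -> odd `|v b|.
Proof.
move=> vu1 vu2 u1_neq0 u2_neq0 an; have [_ _ b_neq0] := diagq_aniso_neq0 an.
have [u [vu u_neq0 bu]] := pval_decomp b_neq0.
have [h [vb|vb]] := int_even_odd (v b); last by rewrite vb; lia.
have vNu : v (- u) = 0 by rewrite pvalN.
have Nu_neq0 : - u != 0 by rewrite oppr_eq0.
have [X [Y XY]] := unit_binary_onto vu1 vu2 vNu u1_neq0 u2_neq0 Nu_neq0.
have := an (ppow h * X) (ppow h * Y) 1; rewrite oner_neq0 !orbT => /(_ isT).
have -> : diagq u1 u2 b (ppow h * X) (ppow h * Y) 1 =
    ppow h ^+ 2 * (u1 * X ^+ 2 + u2 * Y ^+ 2) + b by rewrite /diagq; ring.
by rewrite XY bu vb ppow_even mulrN addNr eqxx.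
Qed.

(* Elements of even valuation are ratios of values of the unit binary part;
   the others are reached through the third coordinate, b having odd valuation. *)
Lemma diagq_ratio_units u1 u2 b t : v u1 = 0 -> v u2 = 0 -> u1 != 0 -> u2 != 0 ->
  diagq_aniso u1 u2 b -> t != 0 -> diagq_ratio u1 u2 b t.
Proof.
move=> vu1 vu2 u1_neq0 u2_neq0 an t_neq0.
have [_ _ b_neq0] := diagq_aniso_neq0 an.
have [w [vw w_neq0 tw]] := pval_decomp t_neq0.
have [q [vt|vt]] := int_even_odd (v t); rewrite vt in tw.
  have [y1 [y2 y12]] := unit_binary_onto vu1 vu2 pval1 u1_neq0 u2_neq0 (oner_neq0 K).
  have [X [Y XY]] := unit_binary_onto vu1 vu2 vw u1_neq0 u2_neq0 w_neq0.
  exists (ppow q * X), (ppow q * Y), 0, y1, y2, 0; rewrite !diagq_z0 y12.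
  by split; [apply: oner_neq0 | rewrite divr1 tw ppow_even -XY; ring].
have [u3 [vu3 u3_neq0 bu3]] := pval_decomp b_neq0.
have [h vb] : exists h, v b = h + h + 1.
  have [h [vb|vb]] := int_even_odd (v b); last by exists h.
  by have := diagq_aniso_pval_odd vu1 vu2 u1_neq0 u2_neq0 an; rewrite vb; lia.
rewrite vb in bu3.
have vuw : v (u3 / w) = 0 by rewrite pvalM ?invr_eq0 // pvalV // vu3 vw.
have uw_neq0 : u3 / w != 0 by rewrite mulf_neq0 ?invr_eq0.
have [Y1 [Y2 Y12]] := unit_binary_onto vu1 vu2 vuw u1_neq0 u2_neq0 uw_neq0.
exists 0, 0, (ppow (q - h)), Y1, Y2, 0; rewrite diagq_z0 Y12.
split; first by rewrite mulf_neq0 ?invr_eq0.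
rewrite /diagq tw bu3 ppow_odd ppow_odd expr0n /= !mulr0 !add0r.
have -> : ppow q = ppow h * ppow (q - h) by rewrite -ppowD; congr ppow; lia.
by field; rewrite u3_neq0 w_neq0.
Qed.

Lemma diagq_ratio_even_gap a b c t : diagq_aniso a b c -> (exists m, v b = v a + m + m) ->
  t != 0 -> diagq_ratio a b c t.
Proof.
move=> an [m vb] t_neq0; have [a_neq0 b_neq0 c_neq0] := diagq_aniso_neq0 an.
have l_neq0 := ppow_neq0 (- v a); have s_neq0 := ppow_neq0 (- m).
apply: (@diagq_ratio_scale _ _ _ (ppow (- v a)) 1 (ppow (- m)) 1) => //.
apply: diagq_ratio_units => //.
- by rewrite expr1n mulr1 pvalM // pval_ppow; lia.
- by rewrite pvalM ?mulf_neq0 ?expf_neq0 // pval_sqr // pvalM // !pval_ppow; lia.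
- by rewrite expr1n mulr1 mulf_neq0.
- by rewrite !mulf_neq0 ?expf_neq0.
- by apply: diagq_aniso_scale => //; apply: oner_neq0.
Qed.

(* Two of the three valuations have the same parity. *)
Lemma diagq_ratio_odd a b c t : diagq_aniso a b c -> t != 0 -> diagq_ratio a b c t.
Proof.
move=> an t_neq0.
have [qa va] := int_even_odd (v a); have [qb vb] := int_even_odd (v b).
have [qc vc] := int_even_odd (v c).
case: va vb vc => va [] vb [] vc.
all: try by apply: diagq_ratio_even_gap => //; exists (qb - qa); lia.
all: try by apply/diagq_ratio_swap/diagq_ratio_even_gap/t_neq0;
  [apply: diagq_aniso_swap | exists (qc - qa); lia].
all: by apply/diagq_ratio_cycle/diagq_ratio_even_gap/t_neq0;
  [apply: diagq_aniso_cycle | exists (qc - qb); lia].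
Qed.

End OddPrime.

Section PrimeTwo.
Hypothesis p2 : p = 2%N.

Lemma pval_odd (n : nat) : odd n -> v n%:R = 0.
Proof.
move=> n_odd; rewrite pval_nat; last by case: n n_odd.
by rewrite logn_coprime // p2 coprime2n.
Qed.

Lemma sqr_near_odd (x : K) (b : nat) : odd b -> vge 3 (x - b%:R) ->
  exists2 s, s != 0 & x = b%:R * s ^+ 2.
Proof.
move=> b_odd xb; have b_neq0 : (b%:R : K) != 0 by apply: natr_neq0; case: b b_odd {xb}.
have [s s_neq0 st] : exists2 s, s != 0 & x / b%:R = s ^+ 2.
  apply: sqr_near1; rewrite pval_2 p2 /= mulr1.
  have -> : x / b%:R - 1 = (x - b%:R) / b%:R by field.
  by have := vgeMr (b%:R : K)^-1 xb; rewrite pvalV // pval_odd // oppr0 addr0.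
by exists s; rewrite // -st; field.
Qed.

Lemma sq_ratio2_sound (a b : nat) (neg : bool) : sq_ratio2 a b neg ->
  exists2 s, s != 0 & (if neg then - a%:R else a%:R : K) = b%:R * s ^+ 2.
Proof.
move=> rat; have [/odd_partE [_ ea] /odd_partE [_ eb]] := sq_ratio2_pos rat.
case/and4P: rat => oa_odd ob_odd kab_even oab.
set oa := odd_part a in oa_odd oab ea; set ob := odd_part b in ob_odd oab eb.
set ka := logn 2 a in kab_even ea; set kb := logn 2 b in kab_even eb.
set soa : K := if neg then - oa%:R else oa%:R.
have soa_ob : vge 3 (soa - ob%:R).
  rewrite /soa; case: (neg) oab => /eqP oab.
    have -> : - (oa%:R : K) - ob%:R = - (oa + ob)%N%:R by rewrite natrD; ring.
    by apply/vgeN/vge_nat; rewrite p2 /dvdn oab.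
  apply/vge_modn; rewrite p2; apply/eqP; rewrite -(eqn_modDr (7 * ob)) oab.
  by rewrite -mulSn modnMr.
have [tau tau_neq0 tau_ob] := sqr_near_odd ob_odd soa_ob.
have [g kag] : exists g : int, ka%:Z = kb%:Z + g + g.
  exists ((ka + kb)./2%:Z - kb%:Z); have := odd_double_half (ka + kb).
  by rewrite (negbTE kab_even) add0n -addnn; lia.
exists (ppow g * tau); first by rewrite mulf_neq0 ?ppow_neq0.
have aK : (a%:R : K) = oa%:R * ppow ka by rewrite ea natrM natrX -p2 -ppow_nat.
have bK : (b%:R : K) = ob%:R * ppow kb by rewrite eb natrM natrX -p2 -ppow_nat.
have -> : (if neg then - a%:R else a%:R : K) = soa * ppow ka.
  by rewrite aK /soa; case: (neg); rewrite ?mulNr.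
by rewrite tau_ob bK kag !ppowD; ring.
Qed.

Lemma sqclass2_decomp (x : K) : x != 0 ->
  exists r, r \in sqclass2 /\ exists2 s, s != 0 & x = r%:R * s ^+ 2.
Proof.
move=> x_neq0; have [u [vu u_neq0 xu]] := pval_decomp x_neq0.
have [n [n_odd un]] := unit_approx (M := 3) vu u_neq0 isT.
rewrite p2 dvdn2 negbK in n_odd.
have r_odd : odd (n %% 8) by rewrite odd_mod.
have ur : vge 3 (u - (n %% 8)%N%:R).
  rewrite -(subrK n%:R u) -addrA; apply: vgeD un _.
  by apply/vge_modn; rewrite p2 modn_mod.
have [tau tau_neq0 utau] := sqr_near_odd r_odd ur.
have mem8 : (n %% 8)%N \in sqclass2 /\ (2 * (n %% 8))%N \in sqclass2.
  have : (n %% 8 < 8)%N by rewrite ltn_pmod.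
  by move: r_odd; case: (n %% 8)%N => [|[|[|[|[|[|[|[|[|]]]]]]]]].
have [q [] vx] := int_even_odd (v x); rewrite xu vx utau.
  exists (n %% 8)%N; split; first exact: mem8.1.
  by exists (ppow q * tau); rewrite ?mulf_neq0 ?ppow_neq0 // ppow_even; ring.
exists (2 * (n %% 8))%N; split; first exact: mem8.2.
by exists (ppow q * tau); rewrite ?mulf_neq0 ?ppow_neq0 // ppow_odd natrM p2; ring.
Qed.

Lemma diagq_natE (r1 r2 r3 : nat) (x : nat * nat * nat) :
  (diagq_nat r1 r2 r3 x)%:R = diagq r1%:R r2%:R r3%:R x.1.1%:R x.1.2%:R x.2%:R.
Proof. by rewrite /diagq_nat /diagq !natrD !(natrM _ r1) !(natrM _ r2) (natrM _ r3) !natrX. Qed.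

Lemma diagq_ratio_sqclass2 r1 r2 r3 c : r1 \in sqclass2 -> r2 \in sqclass2 ->
  r3 \in sqclass2 -> c \in sqclass2 ->
  diagq_aniso r1%:R r2%:R r3%:R -> diagq_ratio r1%:R r2%:R r3%:R c%:R.
Proof.
move=> h1 h2 h3 hc an; move/allP: diag_tableT => /(_ r1 h1) /allP /(_ r2 h2) /allP /(_ r3 h3).
case/orP=> [/hasP [[[x1 x2] x3] _ /= iso] | /allP /(_ c hc) /hasP [y _ /hasP [x _ rat]]].
  have [_ /= x3_gt0] := sq_ratio2_pos iso; have [s s_neq0 e] := sq_ratio2_sound iso.
  have x3s_neq0 : x3%:R * s != 0.
    rewrite mulf_neq0 // natr_neq0 //.
    by apply: contraTneq x3_gt0 => ->; rewrite exp0n // muln0.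
  exfalso; have := an x1%:R x2%:R (x3%:R * s); rewrite x3s_neq0 orbT => /(_ isT) /eqP; apply.
  have -> : diagq r1%:R r2%:R r3%:R x1%:R x2%:R (x3%:R * s) =
      (r1 * x1 ^ 2 + r2 * x2 ^ 2)%N%:R + (r3 * x3 ^ 2)%N%:R * s ^+ 2.
    by rewrite /diagq natrD !(natrM _ r1) !(natrM _ r2) !(natrM _ r3) !natrX; ring.
  by rewrite -e /= addrN.
have [_ cy_gt0] := sq_ratio2_pos rat; have [s s_neq0 e] := sq_ratio2_sound rat.
have y_neq0 : ((diagq_nat r1 r2 r3 y)%:R : K) != 0.
  by apply: natr_neq0; apply: contraTneq cy_gt0 => ->; rewrite muln0.
exists x.1.1%:R, x.1.2%:R, x.2%:R, (s * y.1.1%:R), (s * y.1.2%:R), (s * y.2%:R).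
have -> : diagq r1%:R r2%:R r3%:R (s * y.1.1%:R) (s * y.1.2%:R) (s * y.2%:R) =
    s ^+ 2 * (diagq_nat r1 r2 r3 y)%:R by rewrite diagq_natE /diagq; ring.
split; first by rewrite mulf_neq0 ?expf_neq0.
by rewrite -diagq_natE e natrM; field; rewrite s_neq0 y_neq0.
Qed.

Lemma diagq_ratio_two a b c t : diagq_aniso a b c -> t != 0 -> diagq_ratio a b c t.
Proof.
move=> an t_neq0; have [a_neq0 b_neq0 c_neq0] := diagq_aniso_neq0 an.
have [r1 [h1 [s1 s1_neq0 e1]]] := sqclass2_decomp a_neq0.
have [r2 [h2 [s2 s2_neq0 e2]]] := sqclass2_decomp b_neq0.
have [r3 [h3 [s3 s3_neq0 e3]]] := sqclass2_decomp c_neq0.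
have [rc [hc [sc sc_neq0 ->]]] := sqclass2_decomp t_neq0.
have unscale (r : nat) s : s != 0 -> 1 * (r%:R * s ^+ 2) * (s^-1) ^+ 2 = r%:R :> K.
  by move=> s_neq0; field.
apply: (@diagq_ratio_scale _ _ _ 1 s1^-1 s2^-1 s3^-1); first exact: oner_neq0.
rewrite e1 e2 e3 !unscale //; apply/diagq_ratioMsqr/diagq_ratio_sqclass2 => //.
have := diagq_aniso_scale (oner_neq0 K) (invr_neq0 s1_neq0) (invr_neq0 s2_neq0)
  (invr_neq0 s3_neq0) an.
by rewrite e1 e2 e3 !unscale.
Qed.

End PrimeTwo.

Lemma diagq_ratio_all a b c t : diagq_aniso a b c -> t != 0 -> diagq_ratio a b c t.
Proof.
by case: (eqVneq p 2%N) => [/diagq_ratio_two | /diagq_ratio_odd]; apply.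
Qed.

(* The form with Gram matrix [[a, d, e], [d, b, f], [e, f, c]]. *)
Definition q3 (a b c d e f x y z : K) : K :=
  a * x * x + b * y * y + c * z * z + 2 * d * x * y + 2 * e * x * z + 2 * f * y * z.

Definition q3_aniso (a b c d e f : K) : Prop :=
  forall x y z, (x != 0) || (y != 0) || (z != 0) -> q3 a b c d e f x y z != 0.

Definition q3_ratio (a b c d e f t : K) : Prop := exists x y z x' y' z',
  q3 a b c d e f x' y' z' != 0 /\ t = q3 a b c d e f x y z / q3 a b c d e f x' y' z'.

(* Completing the square twice: with B = ab - d^2, F = af - de, C = ac - e^2
   and G = BC - F^2, the substitution X = ax + dy + ez, Y = By + Fz gives
   aB q3(x, y, z) = B X^2 + Y^2 + G z^2. *)
Lemma q3_ratio_all a b c d e f t : q3_aniso a b c d e f -> t != 0 -> q3_ratio a b c d e f t.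
Proof.
move=> an t_neq0.
have a_neq0 : a != 0.
  by have := an 1 0 0; rewrite oner_neq0 /q3 => /(_ isT); apply: contra => /eqP ->; apply/eqP; ring.
set B := a * b - d ^+ 2.
have B_neq0 : B != 0.
  have := an (- d / a) 1 0; rewrite oner_neq0 orbT => /(_ isT).
  have -> : q3 a b c d e f (- d / a) 1 0 = B / a by rewrite /q3 /B; field.
  by apply: contra => /eqP ->; rewrite mul0r.
set F := a * f - d * e; set C := a * c - e ^+ 2; set G := B * C - F ^+ 2.
pose iy Y Z := (Y - F * Z) / B; pose ix X Y Z := (X - d * iy Y Z - e * Z) / a.
have key X Y Z : diagq B 1 G X Y Z = a * B * q3 a b c d e f (ix X Y Z) (iy Y Z) Z.
  by rewrite /diagq /q3 /ix /iy /G /C /F /B; field; rewrite a_neq0 B_neq0.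
have an' : diagq_aniso B 1 G.
  move=> X Y Z XYZ; rewrite key !mulf_neq0 //; apply: an; apply: contraTT XYZ.
  rewrite !negb_or !negbK => /andP [/andP [/eqP x0 /eqP y0] /eqP z0].
  have Y0 : Y = 0.
    have -> : Y = B * iy Y Z + F * Z by rewrite /iy; field.
    by rewrite y0 z0 !mulr0 addr0.
  have X0 : X = 0.
    have -> : X = a * ix X Y Z + d * iy Y Z + e * Z by rewrite /ix; field.
    by rewrite x0 y0 z0 !mulr0 !addr0.
  by rewrite X0 Y0 z0 eqxx.
have [X [Y [Z [X' [Y' [Z' []]]]]]] := diagq_ratio_all an' t_neq0.
rewrite !key !mulf_eq0 !negb_or => /andP [/andP [_ _] den_neq0] ->.
exists (ix X Y Z), (iy Y Z), Z, (ix X' Y' Z'), (iy Y' Z'), Z'; split => //.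
by field; rewrite a_neq0 B_neq0 den_neq0.
Qed.

Lemma vge_abs_pval (k : K) : vge (- `|v k|%N%:Z) k.
Proof. by have [->|k_neq0] := eqVneq k 0; [left | right; lia]. Qed.

Lemma vge_bilin k (c x y : K) : vge k c -> vge 0 x -> vge 0 y -> vge k (c * x * y).
Proof. by move=> hc hx hy; have := vgeM (vgeM hc hx) hy; rewrite !addr0. Qed.

Lemma vge_bilinB k M (c x y x' y' : K) : vge k c -> vge 0 x -> vge 0 y' ->
  vge M (x - x') -> vge M (y - y') -> vge (k + M) (c * x * y - c * x' * y').
Proof.
move=> hc hx hy' dx dy.
have -> : c * x * y - c * x' * y' = c * (x * (y - y') + (x - x') * y') by ring.
apply: vgeM hc _; apply: vgeD; first by have := vgeM hx dy; rewrite add0r.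
by have := vgeM dx hy'; rewrite addr0.
Qed.

Section TernaryBounds.
Variables (a b c d e f : K) (L : int).
Hypotheses (ha : vge L a) (hb : vge L b) (hc : vge L c).
Hypotheses (hd : vge L (2 * d)) (he : vge L (2 * e)) (hf : vge L (2 * f)).

Lemma q3_vge x y z : vge 0 x -> vge 0 y -> vge 0 z -> vge L (q3 a b c d e f x y z).
Proof. by move=> hx hy hz; rewrite /q3; repeat apply: vgeD; apply: vge_bilin. Qed.

Lemma q3_vgeB M x y z x' y' z' :
  vge 0 x -> vge 0 y -> vge 0 z -> vge 0 x' -> vge 0 y' -> vge 0 z' ->
  vge M (x - x') -> vge M (y - y') -> vge M (z - z') ->
  vge (L + M) (q3 a b c d e f x y z - q3 a b c d e f x' y' z').
Proof.
move=> hx hy hz hx' hy' hz' dx dy dz.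
have -> : q3 a b c d e f x y z - q3 a b c d e f x' y' z' =
  (a * x * x - a * x' * x') + (b * y * y - b * y' * y') + (c * z * z - c * z' * z')
  + (2 * d * x * y - 2 * d * x' * y') + (2 * e * x * z - 2 * e * x' * z')
  + (2 * f * y * z - 2 * f * y' * z') by rewrite /q3; ring.
by do 5 (apply: vgeD; last by apply: vge_bilinB); apply: vge_bilinB.
Qed.

End TernaryBounds.

(* With L a lower bound for the valuations of the coefficients, moving integral
   arguments by p^M moves the values by p^(L + M) and the ratio by
   p^(2L + M - 2 v(den)). *)
Lemma q3_ratio_approx_integral a b c d e f (x y z x' y' z' : K) (m : int) :
  vge 0 x -> vge 0 y -> vge 0 z -> vge 0 x' -> vge 0 y' -> vge 0 z' ->
  q3 a b c d e f x' y' z' != 0 ->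
  exists n1 n2 n3 n1' n2' n3' : nat, q3 a b c d e f n1'%:R n2'%:R n3'%:R != 0 /\
    vge m (q3 a b c d e f x y z / q3 a b c d e f x' y' z'
           - q3 a b c d e f n1%:R n2%:R n3%:R / q3 a b c d e f n1'%:R n2'%:R n3'%:R).
Proof.
move=> hx hy hz hx' hy' hz' den_neq0.
set L : int := - (`|v a| + `|v b| + `|v c| + `|v (2 * d)| + `|v (2 * e)| + `|v (2 * f)|)%N%:Z.
have vgeL k : (`|v k| <= `|v a| + `|v b| + `|v c| + `|v (2 * d)| + `|v (2 * e)| + `|v (2 * f)|)%N ->
    vge L k by move=> hk; apply: vge_le (vge_abs_pval k); lia.
have [ha hb hc] : [/\ vge L a, vge L b & vge L c] by split; apply: vgeL; lia.
have [hd he hf] : [/\ vge L (2 * d), vge L (2 * e) & vge L (2 * f)] by split; apply: vgeL; lia.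
set A := q3 a b c d e f x y z; set B := q3 a b c d e f x' y' z'.
have vA : vge L A by apply: q3_vge.
have vB : L <= v B := vge_pval (q3_vge ha hb hc hd he hf hx' hy' hz') den_neq0.
set M : nat := (`|m| + `|L| + `|L| + `|v B| + `|v B| + `|v B| + 1)%N.
have [n1 s1] := nat_approx M hx; have [n2 s2] := nat_approx M hy.
have [n3 s3] := nat_approx M hz; have [n1' s1'] := nat_approx M hx'.
have [n2' s2'] := nat_approx M hy'; have [n3' s3'] := nat_approx M hz'.
set A' := q3 a b c d e f n1%:R n2%:R n3%:R; set B' := q3 a b c d e f n1'%:R n2'%:R n3'%:R.
have dA : vge (L + M) (A - A') by apply: q3_vgeB => //; apply: vge_nat0.
have dB : vge (L + M) (B - B') by apply: q3_vgeB => //; apply: vge_nat0.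
have vB' : v B' = v B.
  have -> : B' = B + - (B - B') by ring.
  by apply: pvalDl => //; apply: vgeN; apply: vge_le dB; lia.
have B'_neq0 : B' != 0.
  by apply/eqP => B'0; move: dB; rewrite B'0 subr0 => /vge_pval /(_ den_neq0); lia.
exists n1, n2, n3, n1', n2', n3'; split => //.
have -> : A / B - A' / B' = (A * (- (B - B')) + (A - A') * B) * (B * B')^-1.
  by field; rewrite den_neq0 B'_neq0.
have num : vge (L + L + M%:Z) (A * (- (B - B')) + (A - A') * B).
  apply: vgeD; first by have := vgeM vA (vgeN dB); rewrite addrA.
  by have := vgeMr B dA; apply: vge_le; lia.
by have := vgeMr (B * B')^-1 num; rewrite pvalV ?mulf_neq0 // pvalM // vB'; apply: vge_le; lia.
Qed.

Lemma q3_scale a b c d e f l x y z :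
  q3 a b c d e f (l * x) (l * y) (l * z) = l ^+ 2 * q3 a b c d e f x y z.
Proof. by rewrite /q3; ring. Qed.

Lemma q3_ratio_approx a b c d e f (x y z x' y' z' : K) (m : int) :
  q3 a b c d e f x' y' z' != 0 ->
  exists n1 n2 n3 n1' n2' n3' : nat, q3 a b c d e f n1'%:R n2'%:R n3'%:R != 0 /\
    vge m (q3 a b c d e f x y z / q3 a b c d e f x' y' z'
           - q3 a b c d e f n1%:R n2%:R n3%:R / q3 a b c d e f n1'%:R n2'%:R n3'%:R).
Proof.
move=> den_neq0.
set N := (`|v x| + `|v y| + `|v z| + `|v x'| + `|v y'| + `|v z'|)%N.
have l_neq0 := ppow_neq0 N.
have integral (w : K) : (`|v w| <= N)%N -> vge 0 (ppow N * w).
  move=> hw; have [->|w_neq0] := eqVneq w 0; first by rewrite mulr0; left.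
  by right; rewrite pvalM ?ppow_neq0 // pval_ppow; lia.
have := @q3_ratio_approx_integral a b c d e f (ppow N * x) (ppow N * y) (ppow N * z)
  (ppow N * x') (ppow N * y') (ppow N * z') m.
rewrite !q3_scale.
have -> : ppow N ^+ 2 * q3 a b c d e f x y z / (ppow N ^+ 2 * q3 a b c d e f x' y' z') =
    q3 a b c d e f x y z / q3 a b c d e f x' y' z' by field; rewrite l_neq0 den_neq0.
apply; try by apply: integral; rewrite /N; lia.
by rewrite mulf_neq0 // expf_neq0.
Qed.

Lemma qform_ext n (A : 'M[K]_n) x y : x =1 y -> qform A x = qform A y.
Proof. by move=> xy; apply: eq_bigr => i _; apply: eq_bigr => j _; rewrite !xy. Qed.

Lemma qform_scale n (A : 'M[K]_n) x s : qform A (fun i => s * x i) = s ^+ 2 * qform A x.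
Proof.
rewrite /qform mulr_sumr; apply: eq_bigr => i _; rewrite mulr_sumr.
by apply: eq_bigr => j _; rewrite expr2; ring.
Qed.

Definition embed3 (T : zmodType) (n : nat) (x0 x1 x2 : T) : 'I_n -> T :=
  fun i => if val i == 0%N then x0 else if val i == 1%N then x1 else if val i == 2%N then x2 else 0.

Section FirstThreeCoordinates.
Variables (n : nat) (A : 'M[K]_n.+3).
Hypothesis A_sym : A^T = A.
Let i1 : 'I_n.+3 := lift ord0 ord0.
Let i2 : 'I_n.+3 := lift ord0 (lift ord0 ord0).

Definition qform3 : K -> K -> K -> K :=
  q3 (A ord0 ord0) (A i1 i1) (A i2 i2) (A ord0 i1) (A ord0 i2) (A i1 i2).

Lemma qform_embed3 x y z : qform A (embed3 x y z) = qform3 x y z.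
Proof.
have sym i j : A j i = A i j by rewrite -{1}A_sym mxE.
have tail (F : 'I_n.+3 -> K) : (forall i, F (lift ord0 (lift ord0 (lift ord0 i))) = 0) ->
    \sum_(i < n.+3) F i = F ord0 + F i1 + F i2.
  by move=> F0; rewrite !big_ord_recl big1 ?addr0 ?addrA.
rewrite /qform tail => [|i]; last by apply: big1 => j _; rewrite /embed3 /= mulr0 mul0r.
rewrite !tail ?{}/embed3 /= => [|i|i|i]; try by rewrite mulr0.
by rewrite /qform3 /q3 (sym ord0) (sym ord0 i2) (sym i1 i2); ring.
Qed.

Lemma qform_embed3_nat (n1 n2 n3 : nat) :
  qform A (fun i => (embed3 (n1 : int) (n2 : int) (n3 : int) i)%:~R) = qform3 n1%:R n2%:R n3%:R.
Proof.
rewrite -qform_embed3; apply: qform_ext => i; rewrite /embed3.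
by do 3 (case: ifP => _; first by rewrite pmulrn); rewrite mulr0z.
Qed.

Lemma pdense_ratio_qvalues3 : anisotropic A -> pdense V (ratio_set (qvalues_Z A)).
Proof.
move=> an.
have an3 : q3_aniso (A ord0 ord0) (A i1 i1) (A i2 i2) (A ord0 i1) (A ord0 i2) (A i1 i2).
  move=> x y z xyz; rewrite -/(qform3 x y z) -qform_embed3; apply: an.
  by case/orP: xyz => [/orP [] | ] ?; [exists ord0 | exists i1 | exists i2].
have nat_ratio n1 n2 n3 n1' n2' n3' : qform3 n1'%:R n2'%:R n3'%:R != 0 ->
    ratio_set (qvalues_Z A) (qform3 n1%:R n2%:R n3%:R / qform3 n1'%:R n2'%:R n3'%:R).
  move=> den_neq0; exists (qform3 n1%:R n2%:R n3%:R), (qform3 n1'%:R n2'%:R n3'%:R).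
  split; [|split; [|split]] => //.
  - by exists (embed3 (n1 : int) (n2 : int) (n3 : int)); rewrite qform_embed3_nat.
  - by exists (embed3 (n1' : int) (n2' : int) (n3' : int)); rewrite qform_embed3_nat.
move=> y m; have [->|y_neq0] := eqVneq y 0.
  have e1_neq0 : qform3 1%:R 0%:R 0%:R != 0 by apply: an3; rewrite oner_neq0.
  exists (qform3 0%:R 0%:R 0%:R / qform3 1%:R 0%:R 0%:R); split; first exact: nat_ratio.
  by left; rewrite mulr0n /qform3 /q3 !mulr0 !add0r mul0r.
have [x [y' [z [x' [y'' [z' [den_neq0 ey]]]]]]] := q3_ratio_all an3 y_neq0.
have [n1 [n2 [n3 [n1' [n2' [n3' [den'_neq0 close]]]]]]] := q3_ratio_approx x y' z m den_neq0.
exists (qform3 n1%:R n2%:R n3%:R / qform3 n1'%:R n2'%:R n3'%:R).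
by split; [exact: nat_ratio | apply/vcloseE; rewrite ey].
Qed.

End FirstThreeCoordinates.

(* A ratio close enough to c0 is c0 times a square, by Hensel; rescaling the
   denominator by that square makes it exactly c0. *)
Lemma ratio_gap_not_pdense n (A : 'M[K]_n) (c0 : K) : c0 != 0 ->
  (forall x y : 'I_n -> K, qform A y != 0 -> qform A x / qform A y != c0) ->
  ~ pdense V (ratio_set (qvalues_Z A)).
Proof.
move=> c0_neq0 gap dense.
have [c [[a [b [[xa ea] [[xb eb] [b_neq0 ec]]]]] c_close]] := dense c0 (v c0 + 2 * v 2 + 1).
set X := fun i => ((xa i)%:~R : K); set Y := fun i => ((xb i)%:~R : K).
have Y_neq0 : qform A Y != 0 by rewrite -eb.
have cXY : c = qform A X / qform A Y by rewrite ec ea eb.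
move/vcloseE: c_close => c_close.
have c_neq0 : c != 0.
  apply/eqP => c_eq0; move: c_close; rewrite c_eq0 subr0.
  by move=> /vge_pval /(_ c0_neq0); have := pval2_ge0; lia.
have [s s_neq0 cs] : exists2 s, s != 0 & c / c0 = s ^+ 2.
  apply: sqr_near1; have -> : c / c0 - 1 = - (c0 - c) * c0^-1 by field.
  by have := vgeMr c0^-1 (vgeN c_close); rewrite pvalV //; apply: vge_le; lia.
have sY_neq0 : qform A (fun i => s * Y i) != 0 by rewrite qform_scale mulf_neq0 ?expf_neq0.
have XcY : qform A X = c * qform A Y by rewrite cXY; field.
have := gap X _ sY_neq0; rewrite qform_scale XcY -cs.
have -> : c * qform A Y / (c / c0 * qform A Y) = c0 by field; rewrite c_neq0 c0_neq0 Y_neq0.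
by rewrite eqxx.
Qed.

Lemma not_pdense_ratio_qvalues1 (A : 'M[K]_1) : ~ pdense V (ratio_set (qvalues_Z A)).
Proof.
apply: (ratio_gap_not_pdense p_neq0) => x y; rewrite /qform !big_ord1 => y_neq0.
have a_neq0 : A ord0 ord0 != 0 by apply: contraNneq y_neq0 => ->; rewrite !mul0r.
have y0_neq0 : y ord0 != 0 by apply: contraNneq y_neq0 => ->; rewrite !mulr0.
have -> : A ord0 ord0 * x ord0 * x ord0 / (A ord0 ord0 * y ord0 * y ord0) =
    (x ord0 / y ord0) ^+ 2 by field; rewrite a_neq0 y0_neq0.
have [->|r_neq0] := eqVneq (x ord0 / y ord0) 0; first by rewrite expr0n eq_sym p_neq0.
by apply/eqP => /(congr1 v); rewrite pval_sqr // pval_p; lia.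
Qed.

Lemma pvalMsqr (u Y : K) : u != 0 -> Y != 0 -> v (u * Y ^+ 2) = v u + 2 * v Y.
Proof. by move=> u_neq0 Y_neq0; rewrite pvalM ?expf_neq0 // pval_sqr. Qed.

Section BinaryOddPrime.
Hypothesis p_neq2 : p != 2%N.

Lemma binary_unit_nonrep_p u : v u = 0 -> u != 0 -> (forall s, - u != s ^+ 2) ->
  forall X Y, X ^+ 2 + u * Y ^+ 2 != p%:R.
Proof.
move=> vu u_neq0 u_nsq X Y; apply/eqP => e.
have [X0|X_neq0] := eqVneq X 0.
  move: e; rewrite X0 expr0n /= add0r.
  have [->|Y_neq0] := eqVneq Y 0.
    by rewrite expr0n /= mulr0 => /esym/eqP; rewrite (negbTE p_neq0).
  by move=> /(congr1 v); rewrite pvalMsqr // vu pval_p; lia.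
have [Y0|Y_neq0] := eqVneq Y 0.
  by move: e; rewrite Y0 expr0n /= mulr0 addr0 => /(congr1 v); rewrite pval_sqr // pval_p; lia.
have uY_neq0 : u * Y ^+ 2 != 0 by rewrite mulf_neq0 ?expf_neq0.
have X2_neq0 : X ^+ 2 != 0 by rewrite expf_neq0.
have vX2 := pval_sqr X_neq0; have vuY := pvalMsqr u_neq0 Y_neq0; rewrite vu add0r in vuY.
case: (ltgtP (v X) (v Y)) => cmpXY.
- move: (congr1 v e); rewrite pvalDl //; last by right; lia.
  by rewrite pval_p; lia.
- move: (congr1 v e); rewrite addrC pvalDl //; last by right; lia.
  by rewrite pval_p; lia.
have vX_le0 : v X <= 0.
  by have := pval_add V X2_neq0 uY_neq0; rewrite e p_neq0 pval_p => /(_ isT); lia.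
have [s s_neq0 st] : exists2 s, s != 0 & - u * Y ^+ 2 / X ^+ 2 = s ^+ 2.
  apply: sqr_near1; rewrite pval_2 (negbTE p_neq2) mulr0 add0r.
  have -> : - u * Y ^+ 2 / X ^+ 2 - 1 = - (X ^+ 2 + u * Y ^+ 2) * (X ^+ 2)^-1.
    by field; rewrite X_neq0.
  rewrite e mulNr; apply: vgeN; right.
  by rewrite pvalM ?invr_eq0 ?p_neq0 // pval_p pvalV //; lia.
apply/negP: (u_nsq (s * X / Y)); rewrite negbK; apply/eqP.
have -> : - u = - u * Y ^+ 2 / X ^+ 2 * X ^+ 2 / Y ^+ 2 by field; rewrite X_neq0 Y_neq0.
by rewrite st; field.
Qed.

Lemma nonresidue_not_sqr (e : nat) : (forall z, e != z ^ 2 %[mod p]) -> v e%:R = 0 ->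
  forall s : K, e%:R != s ^+ 2.
Proof.
move=> e_nres ve s; apply/eqP => es.
have e_neq0 : (e%:R : K) != 0.
  by apply: natr_neq0; apply: contraTneq (e_nres 0) => ->; rewrite mod0n.
have s_neq0 : s != 0 by apply: contra_neq e_neq0 => s0; rewrite es s0 expr0n.
have vs : v s = 0 by move: (congr1 v es); rewrite ve pval_sqr //; lia.
have vs0 : vge 0 s by right; rewrite vs.
have [z sz] := nat_approx 1 vs0.
have : vge 1 (e%:R - (z ^ 2)%N%:R : K).
  rewrite es natrX (_ : s ^+ 2 - z%:R ^+ 2 = (s - z%:R) * ((s - z%:R) + 2 * z%:R)); last by ring.
  have := vgeM sz (_ : vge 0 ((s - z%:R) + 2 * z%:R)); rewrite addr0; apply.
  apply: vgeD; first by apply: vge_le sz; lia.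
  by have := vgeM (vge_nat0 2) (vge_nat0 z); rewrite addr0.
by move/(vge_modn _ _ 1)/eqP; rewrite expn1 (negbTE (e_nres z)).
Qed.

Lemma binary_pu_nonrep u : v u = 0 -> u != 0 ->
  exists2 c0, c0 != 0 & forall X Y, X ^+ 2 + p%:R * u * Y ^+ 2 != c0.
Proof.
move=> vu u_neq0.
have [e [p_e e_nres]] := exists_nonsquare_mod hp (odd_prime_p p_neq2).
have e_gt0 : (0 < e)%N by case: (e) p_e; rewrite ?dvdn0.
have ve : v e%:R = 0 by rewrite pval_nat // logn_coprime // prime_coprime.
have e_nsq := nonresidue_not_sqr e_nres ve.
exists e%:R => [|X Y]; first by apply: natr_neq0; lia.
apply/eqP => eXY.
have [Y0|Y_neq0] := eqVneq Y 0.
  by move: (e_nsq X); rewrite -eXY Y0 expr0n /= mulr0 addr0 eqxx.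
have puY_neq0 : p%:R * u * Y ^+ 2 != 0 by rewrite !mulf_neq0 ?expf_neq0 ?p_neq0.
have vpuY : v (p%:R * u * Y ^+ 2) = 1 + 2 * v Y.
  by rewrite pvalMsqr ?mulf_neq0 ?p_neq0 // pvalM ?p_neq0 // pval_p vu addr0.
have [X0|X_neq0] := eqVneq X 0.
  by move: (congr1 v eXY); rewrite X0 expr0n /= add0r vpuY ve; lia.
have X2_neq0 : X ^+ 2 != 0 by rewrite expf_neq0.
case: (ltP (2 * v X) (1 + 2 * v Y)) => cmpXY; last first.
  move: (congr1 v eXY); rewrite addrC pvalDl //; last by right; rewrite pval_sqr // vpuY; lia.
  by rewrite vpuY ve; lia.
move: (congr1 v eXY); rewrite pvalDl //; last by right; rewrite pval_sqr // vpuY; lia.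
rewrite pval_sqr // ve => vX.
have [s s_neq0 st] : exists2 s, s != 0 & e%:R / X ^+ 2 = s ^+ 2.
  apply: sqr_near1; rewrite pval_2 (negbTE p_neq2) mulr0 add0r.
  have -> : e%:R / X ^+ 2 - 1 = p%:R * u * Y ^+ 2 * (X ^+ 2)^-1 by rewrite -eXY; field.
  by right; rewrite pvalM ?invr_eq0 // vpuY pvalV // pval_sqr //; lia.
apply/negP: (e_nsq (s * X)); rewrite negbK; apply/eqP.
by rewrite exprMn -st; field.
Qed.

End BinaryOddPrime.

Lemma pair_primitive (X Y : K) : (X != 0) || (Y != 0) -> exists k X' Y',
  [/\ X = ppow k * X', Y = ppow k * Y', vge 0 X', vge 0 Y' &
     (X' != 0 /\ v X' = 0) \/ (Y' != 0 /\ v Y' = 0)].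
Proof.
move=> XY.
have [k [vX vY unit]] : exists k,
    [/\ vge k X, vge k Y & (X != 0 /\ v X = k) \/ (Y != 0 /\ v Y = k)].
  have [X0|X_neq0] := eqVneq X 0; have [Y0|Y_neq0] := eqVneq Y 0.
  - by move: XY; rewrite X0 Y0 eqxx.
  - by exists (v Y); split; [left | right | right].
  - by exists (v X); split; [right | left | left].
  exists (Num.min (v X) (v Y)); split; [right; lia | right; lia |].
  by case: (leP (v X) (v Y)) => h; [left | right]; split => //; lia.
have scaled (w : K) : vge k w -> vge 0 (w * ppow (- k)).
  by move=> /(vgeMr (ppow (- k))); rewrite pval_ppow subrr.
have unit_scaled (w : K) : w != 0 /\ v w = k -> w * ppow (- k) != 0 /\ v (w * ppow (- k)) = 0.
  by case=> w_neq0 vw; rewrite pvalM ?ppow_neq0 // pval_ppow vw mulf_neq0 ?ppow_neq0 //; split; lia.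
have unscale (w : K) : w = ppow k * (w * ppow (- k)) by rewrite mulrCA ppowDN mulr1.
exists k, (X * ppow (- k)), (Y * ppow (- k)); split; rewrite -?unscale //; try exact: scaled.
by case: unit => /unit_scaled; [left | right].
Qed.

Section BinaryTwo.
Hypothesis p2 : p = 2%N.

Lemma unit_approx_odd (u : K) (n : nat) : v u = 0 -> u != 0 -> vge 1 (u - n%:R) -> odd n.
Proof.
move=> vu u_neq0 un; apply/negPn/negP => n_even; apply: (unit_not_vge1 vu u_neq0).
rewrite -(subrK n%:R u); apply: vgeD un _.
by apply: vge_nat; rewrite p2 expn1 dvdn2 (negbTE n_even).
Qed.

Lemma binary_approx_odd (r : nat) (X Y : K) : vge 0 X -> vge 0 Y ->
  (X != 0 /\ v X = 0) \/ (Y != 0 /\ v Y = 0) -> exists x y : nat,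
  odd x || odd y /\ vge 5 ((x ^ 2 + r * y ^ 2)%N%:R - (X ^+ 2 + r%:R * Y ^+ 2)).
Proof.
move=> sX sY unit; have [x sx] := nat_approx 5 sX; have [y sy] := nat_approx 5 sY.
exists x, y; split.
  have sx1 : vge 1 (X - x%:R) by apply: vge_le sx.
  have sy1 : vge 1 (Y - y%:R) by apply: vge_le sy.
  case: unit => [[X_neq0 vX] | [Y_neq0 vY]]; first by rewrite (unit_approx_odd vX X_neq0 sx1).
  by rewrite (unit_approx_odd vY Y_neq0 sy1) orbT.
rewrite natrD (natrM _ r) !natrX.
have -> : x%:R ^+ 2 + r%:R * y%:R ^+ 2 - (X ^+ 2 + r%:R * Y ^+ 2) =
    - (X - x%:R) * (X + x%:R) + r%:R * (- (Y - y%:R) * (Y + y%:R)) by ring.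
apply: vgeD; first by have := vgeM (vgeN sx) (vgeD sX (vge_nat0 x)); rewrite addr0.
by have := vgeM (vge_nat0 r) (vgeM (vgeN sy) (vgeD sY (vge_nat0 y))); rewrite addr0 add0r.
Qed.

(* Scale (X, Y) to a primitive integral pair and compare modulo 32. *)
Lemma binary_nonrep_two r : r \in sqclass2 -> r != 7%N ->
  forall X Y : K, X ^+ 2 + r%:R * Y ^+ 2 != (binary_nonrep2 r)%:R.
Proof.
move=> hr hr7 X Y; apply/eqP => eXY; set c := binary_nonrep2 r in eXY.
have c_gt0 : (0 < c)%N by rewrite /c /binary_nonrep2; case: ifP => _ //; case: ifP.
have vc : v c%:R <= 1.
  rewrite pval_nat // p2; suff : (logn 2 c <= 1)%N by lia.
  by rewrite /c /binary_nonrep2; case: ifP => _ //; case: ifP.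
have c_neq0 : (c%:R : K) != 0 by apply: natr_neq0; lia.
have XY : (X != 0) || (Y != 0).
  apply: contraNT c_neq0; rewrite negb_or !negbK => /andP [/eqP X0 /eqP Y0].
  by rewrite -eXY X0 Y0 expr0n /= mulr0 addr0.
have [k [X' [Y' [eX eY sX' sY' unit]]]] := pair_primitive XY.
have eXY' : X' ^+ 2 + r%:R * Y' ^+ 2 = c%:R * ppow (- k) ^+ 2.
  rewrite -eXY eX eY.
  transitivity ((ppow k * ppow (- k)) ^+ 2 * (X' ^+ 2 + r%:R * Y' ^+ 2)); last by ring.
  by rewrite ppowDN expr1n mul1r.
have k_le0 : k <= 0.
  rewrite leNgt; apply/negP => k_gt0.
  have ck_neq0 : c%:R * ppow (- k) ^+ 2 != 0 by rewrite mulf_neq0 ?expf_neq0 ?ppow_neq0.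
  have vL : vge 0 (X' ^+ 2 + r%:R * Y' ^+ 2).
    apply: vgeD; first by have := vgeM sX' sX'; rewrite addr0 expr2.
    by have := vgeM (vge_nat0 r) (vgeM sY' sY'); rewrite !addr0 expr2.
  have := vge_pval vL; rewrite eXY' => /(_ ck_neq0).
  by rewrite pvalM ?expf_neq0 ?ppow_neq0 // pval_sqr ?ppow_neq0 // pval_ppow; lia.
have [x [y [xy_odd]]] := binary_approx_odd r sX' sY' unit.
rewrite eXY' -ppow_even (_ : - k + - k = (`|k| + `|k|)%N); last by lia.
rewrite ppow_nat p2 -natrX -natrM => /vge_modn/eqP; rewrite p2 (_ : (2 ^ 5 = 32)%N) //.
by apply/negP/binary_nonrep2_mod32.
Qed.

End BinaryTwo.

Lemma binary_nonrep (d : K) : d != 0 -> (forall s, - d != s ^+ 2) ->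
  exists2 c0, c0 != 0 & forall X Y, X ^+ 2 + d * Y ^+ 2 != c0.
Proof.
move=> d_neq0 d_nsq; have [p2|p_neq2] := eqVneq p 2%N.
  have [r [hr [s s_neq0 drs]]] := sqclass2_decomp p2 d_neq0.
  have r_neq7 : r != 7%N.
    apply/eqP => r7.
    have [tau _ tau7] : exists2 tau, tau != 0 & - 7%:R = 1%:R * tau ^+ 2 :> K.
      by apply: (sqr_near_odd p2) => //; rewrite -opprD -natrD; apply/vgeN/vge_nat; rewrite p2.
    by move/eqP: (d_nsq (tau * s)); apply; rewrite drs r7 -mulNr tau7; ring.
  exists (binary_nonrep2 r)%:R => [|X Y].
    by apply: natr_neq0; rewrite /binary_nonrep2; case: ifP => _ //; case: ifP.
  by have := binary_nonrep_two p2 hr r_neq7 X (s * Y); rewrite exprMn mulrA -drs.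
have [u [vu u_neq0 du]] := pval_decomp d_neq0.
have [q [vd|vd]] := int_even_odd (v d); rewrite vd ?ppow_even ?ppow_odd in du.
  exists p%:R => [|X Y]; first exact: p_neq0.
  have u_nsq s : - u != s ^+ 2.
    by apply: contra_neq (d_nsq (ppow q * s)) => us; rewrite du exprMn -us; ring.
  apply: contra_neq (binary_unit_nonrep_p p_neq2 vu u_neq0 u_nsq X (ppow q * Y)) => <-.
  by rewrite du; ring.
have [c0 c0_neq0 nrep] := binary_pu_nonrep p_neq2 vu u_neq0.
exists c0 => // X Y; apply: contra_neq (nrep X (ppow q * Y)) => <-.
by rewrite du; ring.
Qed.

Local Notation i1 := (lift ord0 ord0 : 'I_2).

Lemma qform2E (A : 'M[K]_2) x : A^T = A ->
  qform A x = A ord0 ord0 * x ord0 ^+ 2 + A i1 i1 * x i1 ^+ 2 + 2 * A ord0 i1 * x ord0 * x i1.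
Proof.
move=> A_sym; have sym i j : A j i = A i j by rewrite -{1}A_sym mxE.
by rewrite /qform !big_ord_recl !big_ord0 (sym ord0 i1); ring.
Qed.

(* With D = ab - d^2, a q(x) = (a x0 + d x1)^2 + D x1^2, and the ratio of two
   values of the norm form X^2 + D Y^2 is again such a value. *)
Lemma not_pdense_ratio_qvalues2 (A : 'M[K]_2) : A^T = A -> anisotropic A ->
  ~ pdense V (ratio_set (qvalues_Z A)).
Proof.
move=> A_sym an; set a := A ord0 ord0; set b := A i1 i1; set d := A ord0 i1.
set D := a * b - d ^+ 2.
have key x : a * qform A x = (a * x ord0 + d * x i1) ^+ 2 + D * x i1 ^+ 2.
  by rewrite qform2E // /D /a /b /d; ring.
have an2 x0 x1 : (x0 != 0) || (x1 != 0) ->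
    qform A (fun i => if i == ord0 then x0 else x1) != 0.
  by move=> x01; apply: an; case/orP: x01 => ?; [exists ord0 | exists i1].
have a_neq0 : a != 0.
  have := an2 1 0; rewrite oner_neq0 qform2E // => /(_ isT).
  by rewrite /= expr0n /= !mulr0 !addr0 expr1n mulr1.
have D_nsq s : - D != s ^+ 2.
  apply/eqP => Ds; have := an2 ((s - d) / a) 1; rewrite oner_neq0 orbT => /(_ isT) /negP.
  apply; suff : a * qform A (fun i => if i == ord0 then (s - d) / a else 1) == 0.
    by rewrite mulf_eq0 (negbTE a_neq0).
  rewrite key /= (_ : a * ((s - d) / a) + d * 1 = s); last by field.
  by rewrite expr1n mulr1 -Ds addNr.
have D_neq0 : D != 0 by apply: contra_neq (D_nsq 0) => ->; rewrite oppr0 expr0n.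
have [c0 c0_neq0 nrep] := binary_nonrep D_neq0 D_nsq.
apply: (ratio_gap_not_pdense c0_neq0) => x y y_neq0.
set u0 := a * x ord0 + d * x i1; set w0 := a * y ord0 + d * y i1.
have N_neq0 : w0 ^+ 2 + D * y i1 ^+ 2 != 0 by rewrite -key mulf_neq0.
have -> : qform A x / qform A y =
    ((u0 * w0 + D * x i1 * y i1) / (w0 ^+ 2 + D * y i1 ^+ 2)) ^+ 2
    + D * ((u0 * y i1 - x i1 * w0) / (w0 ^+ 2 + D * y i1 ^+ 2)) ^+ 2.
  rewrite -[qform A x](mulKf a_neq0) -[qform A y](mulKf a_neq0) !key -/u0 -/w0.
  by field; rewrite a_neq0 N_neq0.
exact: nrep.
Qed.

End PadicField.

Theorem lemma4 (p : nat) (hp : prime p) (K : fieldType) (V : padic_field p K)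
  (n : nat) (A : 'M[K]_n) (Asym : A^T = A) (Anz : A != 0) (Adet : \det A != 0)
  (Aaniso : anisotropic A) :
  pdense V (ratio_set (qvalues_Z A)) <-> (3 <= n)%N.
Proof.
case: n A Asym Anz Adet Aaniso => [|[|[|n]]] A Asym Anz Adet Aaniso.
- by move: Anz; rewrite thinmx0 eqxx.
- by split=> // /(not_pdense_ratio_qvalues1 hp).
- by split=> // /(not_pdense_ratio_qvalues2 hp Asym Aaniso).
- by split=> // _; apply: pdense_ratio_qvalues3.
Qed.
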